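(* Let $f$ be proper lower semicontinuous with the K\L{} property at $x^*$ with desingularizing function $\varphi:[0,\eta[\to[0,\infty[$, the K\L{} inequality holding on $\Gamma_\eta(x^*,\delta)$. Let $(x^k)$ satisfy $\mathbf{H}_1$, $\mathbf{H}_2$, $\mathbf{H}_3$, put $M=\sup_{k\ge1}\frac1{a_kb_k}$, and assume $\mathbf{S}(x^*,\delta,\rho)$ holds. Then for all $K\ge1$, $x^K\in\underline{\Gamma}_\eta(x^*,\rho)$ and $$\sum_{k=1}^K\|x^{k+1}-x^k\|+\|x^{K+1}-x^K\|\le\|x^1-x^0\|+M\big[\varphi(f(x^1)-f(x^* ))-\varphi(f(x^{K+1})-f(x^* ))\big]+\sum_{k=1}^K\varepsilon_k.$$
   Context: $\partial f$ limiting Fréchet subdifferential, lazy slope $\|\partial f(x)\|_-=\inf_{p\in\partial f(x)}\|p\|$. K\L{} inequality on $\Gamma_\eta(x^*,\delta)=\{x:\|x-x^*\|<\delta,\ f(x^* )<f(x)<f(x^* )+\eta\}$: $\varphi'(f(x)-f(x^* ))\|\partial f(x)\|_-\ge1$, with $\varphi$ continuous concave, $\varphi(0)=0$, $C^1$ with $\varphi'>0$ on $]0,\eta[$. $\underline{\Gamma}_\eta(x^*,r)=\{x:\|x-x^*\|<r,\ f(x^* )\le f(x)<f(x^* )+\eta\}$, $\Gamma_\eta(x^*,r)$ the same with strict inequality $f(x^* )<f(x)$. $\mathbf{H}_1$: $f(x^{k+1})+a_k\|x^{k+1}-x^k\|^2\le f(x^k)$, $a_k>0$. $\mathbf{H}_2$: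 $b_{k+1}\|\partial f(x^{k+1})\|_-\le\|x^{k+1}-x^k\|+\varepsilon_{k+1}$, $b_{k+1}>0$, $\varepsilon_{k+1}\ge0$. $\mathbf{H}_3$: (i) $a_k\ge\underline a>0$; (ii) $(b_k)\notin\ell^1$; (iii) $M<\infty$; (iv) $(\varepsilon_k)\in\ell^1$. $\mathbf{S}(x^*,\delta,\rho)$: $\delta>\rho>0$ and (i) for each $k$, if $x^0,\dots,x^k\in\underline{\Gamma}_\eta(x^*,\rho)$ then $x^{k+1}\in\underline{\Gamma}_\eta(x^*,\delta)$; (ii) $x^0\in\Gamma_\eta(x^*,\rho)$ and $\|x^*-x^0\|+2\sqrt{\frac{f(x^0)-f(x^* )}{a_0}}+M\varphi(f(x^0)-f(x^* ))+\sum_{i=1}^\infty\varepsilon_i<\rho$. *)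

From Stdlib Require Import Reals Lra Classical ClassicalEpsilon.
Open Scope R_scope.
Set Implicit Arguments.

Record Hilbert : Type := {
  hcar :> Type;
  hplus : hcar -> hcar -> hcar;
  hopp : hcar -> hcar;
  hzero : hcar;
  hscal : R -> hcar -> hcar;
  hinner : hcar -> hcar -> R;
  hplus_assoc : forall x y z, hplus x (hplus y z) = hplus (hplus x y) z;
  hplus_comm : forall x y, hplus x y = hplus y x;
  hplus_0 : forall x, hplus x hzero = x;
  hplus_opp : forall x, hplus x (hopp x) = hzero;
  hscal_assoc : forall a b x, hscal a (hscal b x) = hscal (a * b) x;
  hscal_1 : forall x, hscal 1 x = x;
  hscal_distr_l : forall a x y, hscal a (hplus x y) = hplus (hscal a x) (hscal a y);
  hscal_distr_r : forall a b x, hscal (a + b) x = hplus (hscal a x) (hscal b x);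
  hinner_sym : forall x y, hinner x y = hinner y x;
  hinner_plus_l : forall x y z, hinner (hplus x y) z = hinner x z + hinner y z;
  hinner_scal_l : forall a x y, hinner (hscal a x) y = a * hinner x y;
  hinner_pos : forall x, 0 <= hinner x x;
  hinner_def : forall x, hinner x x = 0 -> x = hzero;
  hcomplete : forall u : nat -> hcar,
    (forall e, e > 0 -> exists N, forall m n, (m >= N)%nat -> (n >= N)%nat ->
        sqrt (hinner (hplus (u m) (hopp (u n))) (hplus (u m) (hopp (u n)))) < e) ->
    exists l, forall e, e > 0 -> exists N, forall n, (n >= N)%nat ->
        sqrt (hinner (hplus (u n) (hopp l)) (hplus (u n) (hopp l))) < e
}.

Arguments hplus {h}. Arguments hopp {h}. Arguments hzero {h}.
Arguments hscal {h}. Arguments hinner {h}.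

Definition hminus {H : Hilbert} (x y : H) : H := hplus x (hopp y).
Definition hnorm {H : Hilbert} (x : H) : R := sqrt (hinner x x).

Inductive ereal : Type := EFin (r : R) | EPinf.

Definition ele (a b : ereal) : Prop :=
  match a, b with
  | EFin x, EFin y => x <= y
  | _, EPinf => True
  | EPinf, EFin _ => False
  end.
Definition elt (a b : ereal) : Prop :=
  match a, b with
  | EFin x, EFin y => x < y
  | EFin _, EPinf => True
  | EPinf, _ => False
  end.
Definition eaddr (a : ereal) (r : R) : ereal :=
  match a with EFin x => EFin (x + r) | EPinf => EPinf end.
(** product of a positive real with an extended real (c * (+∞) = +∞) *)
Definition emulr (c : R) (a : ereal) : ereal :=
  match a with EFin x => EFin (c * x) | EPinf => EPinf end.
(** real part of a finite value (only used where finiteness is known) *)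
Definition fv (a : ereal) : R := match a with EFin x => x | EPinf => 0 end.

Definition proper {H : Hilbert} (f : H -> ereal) : Prop := exists x, f x <> EPinf.

Definition lsc {H : Hilbert} (f : H -> ereal) : Prop :=
  forall x (c : R), elt (EFin c) (f x) ->
    exists d, d > 0 /\ forall y, hnorm (hminus y x) < d -> elt (EFin c) (f y).

(** Fréchet subdifferential: p ∈ ∂̂f(x) iff f(x) finite and
    liminf_{y->x, y<>x} (f y - f x - <p,y-x>)/||y-x|| >= 0. *)
Definition frechet_subdiff {H : Hilbert} (f : H -> ereal) (x p : H) : Prop :=
  exists fx, f x = EFin fx /\
    forall e, e > 0 -> exists d, d > 0 /\ forall y, hnorm (hminus y x) < d ->
      ele (EFin (fx + hinner p (hminus y x) - e * hnorm (hminus y x))) (f y).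

(** Limiting (Fréchet) subdifferential: x_k -> x, f(x_k) -> f(x),
    p_k ∈ ∂̂f(x_k), p_k ⇀ p (weakly). *)
Definition limiting_subdiff {H : Hilbert} (f : H -> ereal) (x p : H) : Prop :=
  exists fx, f x = EFin fx /\
  exists (u q : nat -> H) (fu : nat -> R),
    (forall k, frechet_subdiff f (u k) (q k)) /\
    (forall k, f (u k) = EFin (fu k)) /\
    Un_cv (fun k => hnorm (hminus (u k) x)) 0 /\
    Un_cv fu fx /\
    (forall y, Un_cv (fun k => hinner (q k) y) (hinner p y)).

Definition slope_set {H : Hilbert} (f : H -> ereal) (x : H) (r : R) : Prop :=
  exists p, limiting_subdiff f x p /\ r = - hnorm p.

Lemma slope_set_bound {H : Hilbert} (f : H -> ereal) (x : H) : bound (slope_set f x).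
Proof.
  exists 0. intros r [p [_ ->]]. unfold hnorm. pose proof (sqrt_pos (hinner p p)). lra.
Qed.

(** Lazy slope ||∂f(x)||_- = inf_{p ∈ ∂f(x)} ||p||  (= +∞ if ∂f(x) = ∅). *)
Definition lazy_slope {H : Hilbert} (f : H -> ereal) (x : H) : ereal :=
  match excluded_middle_informative (exists r, slope_set f x r) with
  | left h => EFin (- proj1_sig (completeness _ (slope_set_bound f x) h))
  | right _ => EPinf
  end.

(** Γ_η(xs,r) (strict: f(xs) < f(x)) and underline Γ_η(xs,r) (f(xs) <= f(x)),
    where fs = f(xs) is finite. *)
Definition Gamma {H : Hilbert} (f : H -> ereal) (xs : H) (fs eta r : R) (x : H) : Prop :=
  hnorm (hminus x xs) < r /\ elt (EFin fs) (f x) /\ elt (f x) (EFin (fs + eta)).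
Definition Gamma_low {H : Hilbert} (f : H -> ereal) (xs : H) (fs eta r : R) (x : H) : Prop :=
  hnorm (hminus x xs) < r /\ ele (EFin fs) (f x) /\ elt (f x) (EFin (fs + eta)).

Definition desing (eta : R) (phi dphi : R -> R) : Prop :=
  (forall t, 0 <= t < eta -> 0 <= phi t) /\
  phi 0 = 0 /\
  (forall t, 0 <= t < eta -> forall e, e > 0 -> exists d, d > 0 /\
      forall s, 0 <= s < eta -> Rabs (s - t) < d -> Rabs (phi s - phi t) < e) /\
  (forall s t l, 0 <= s < eta -> 0 <= t < eta -> 0 <= l <= 1 ->
      l * phi s + (1 - l) * phi t <= phi (l * s + (1 - l) * t)) /\
  (forall t, 0 < t < eta -> derivable_pt_lim phi t (dphi t)) /\
  (forall t, 0 < t < eta -> continuity_pt dphi t) /\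
  (forall t, 0 < t < eta -> 0 < dphi t).

Definition KL_on {H : Hilbert} (f : H -> ereal) (xs : H) (fs eta delta : R)
  (dphi : R -> R) : Prop :=
  forall x, Gamma f xs fs eta delta x ->
    ele (EFin 1) (emulr (dphi (fv (f x) - fs)) (lazy_slope f x)).

From Stdlib Require Import Reals.
Open Scope R_scope.
From Stdlib Require Import Lra Lia.

(* Write d_k = ||x^{k+1} - x^k|| and r_k = f(x^k) - f(xs). While x^{k+1}, x^{k+2} lie in
   the K\L region, H1, H2, the K\L inequality and the tangent bound for the concave
   function phi give d_{k+1}^2 <= M (phi r_{k+1} - phi r_{k+2}) (d_k + eps_{k+1}), hence
   2 d_{k+1} <= d_k + eps_{k+1} + M (phi r_{k+1} - phi r_{k+2}) by AM-GM; summing telescopes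
   to the length estimate. That estimate bounds the distance travelled from x^0, so by
   condition S(xs, delta, rho) (ii) and induction the iterates never leave the rho-ball,
   which keeps the K\L inequality available at every step. *)

Section HilbertFacts.

Context {V : Hilbert}.

Lemma hinner_0_l (z : V) : hinner hzero z = 0.
Proof. pose proof (hinner_plus_l V hzero hzero z) as E. rewrite hplus_0 in E. lra. Qed.

Lemma hinner_opp_l (y z : V) : hinner (hopp y) z = - hinner y z.
Proof.
  pose proof (hinner_plus_l V y (hopp y) z) as E.
  rewrite hplus_opp, hinner_0_l in E. lra.
Qed.

Lemma hinner_plus_r (x y z : V) : hinner x (hplus y z) = hinner x y + hinner x z.
Proof. rewrite hinner_sym, hinner_plus_l, (hinner_sym V y), (hinner_sym V z). reflexivity. Qed.

Lemma hinner_scal_r a (x y : V) : hinner x (hscal a y) = a * hinner x y.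
Proof. rewrite hinner_sym, hinner_scal_l, hinner_sym. reflexivity. Qed.

Lemma hinner_opp_r (y z : V) : hinner z (hopp y) = - hinner z y.
Proof. rewrite hinner_sym, hinner_opp_l, hinner_sym. reflexivity. Qed.

Lemma hnorm_nonneg (u : V) : 0 <= hnorm u.
Proof. apply sqrt_pos. Qed.

Lemma hdist_sym (x y : V) : hnorm (hminus x y) = hnorm (hminus y x).
Proof.
  unfold hnorm, hminus. f_equal.
  rewrite !hinner_plus_l, !hinner_plus_r, !hinner_opp_l, !hinner_opp_r, (hinner_sym V x y).
  ring.
Qed.

Lemma hminus_chasles (x y z : V) : hminus x z = hplus (hminus x y) (hminus y z).
Proof.
  unfold hminus. rewrite <- hplus_assoc, (hplus_assoc V (hopp y)).
  rewrite (hplus_comm V (hopp y) y), hplus_opp, (hplus_comm V hzero), hplus_0.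
  reflexivity.
Qed.

Lemma hinner_Cauchy_Schwarz (u v : V) : (hinner u v)^2 <= hinner u u * hinner v v.
Proof.
  assert (quad : forall t, 0 <= hinner u u + 2 * t * hinner u v + t^2 * hinner v v).
  { intro t. pose proof (hinner_pos V (hplus u (hscal t v))) as P.
    rewrite !hinner_plus_l, !hinner_plus_r, !hinner_scal_l, !hinner_scal_r,
      (hinner_sym V v u) in P.
    nra. }
  pose proof (hinner_pos V u). pose proof (hinner_pos V v).
  set (A := hinner u u) in *. set (B := hinner u v) in *. set (C := hinner v v) in *.
  destruct (Req_dec C 0) as [C0|C0].
  - (* a nonzero B would make the quadratic in t affine and unbounded below *)
    destruct (Req_dec B 0) as [B0|B0]; [rewrite B0, C0; lra|].
    specialize (quad (- (A + 1) / (2 * B))). rewrite C0 in quad.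
    replace (A + 2 * (- (A + 1) / (2 * B)) * B + (- (A + 1) / (2 * B)) ^ 2 * 0)
      with (-1) in quad by (field; auto).
    lra.
  - specialize (quad (- B / C)).
    assert (A * C - B^2 = C * (A + 2 * (- B / C) * B + (- B / C) ^ 2 * C)) by (field; auto).
    nra.
Qed.

Lemma hnorm_triangle (u v : V) : hnorm (hplus u v) <= hnorm u + hnorm v.
Proof.
  unfold hnorm.
  rewrite !hinner_plus_l, !hinner_plus_r, (hinner_sym V v u).
  pose proof (hinner_Cauchy_Schwarz u v).
  pose proof (hinner_pos V u) as Apos. pose proof (hinner_pos V v) as Cpos.
  set (A := hinner u u) in *. set (B := hinner u v) in *. set (C := hinner v v) in *.
  pose proof (sqrt_pos A). pose proof (sqrt_pos C).
  pose proof (sqrt_sqrt A Apos). pose proof (sqrt_sqrt C Cpos).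
  assert (B <= sqrt A * sqrt C).
  { assert (B * B <= (sqrt A * sqrt C) * (sqrt A * sqrt C)) by nra.
    assert (0 <= sqrt A * sqrt C) by nra.
    nra. }
  rewrite <- (sqrt_square (sqrt A + sqrt C)) by lra.
  apply sqrt_le_1_alt. nra.
Qed.

Lemma hdist_triangle (x y z : V) :
  hnorm (hminus x z) <= hnorm (hminus x y) + hnorm (hminus y z).
Proof. rewrite (hminus_chasles x y z). apply hnorm_triangle. Qed.

Lemma hdist_le_path_length (y : nat -> V) (z : V) n :
  hnorm (hminus (y (S n)) z)
    <= hnorm (hminus (y 0%nat) z) + sum_f_R0 (fun k => hnorm (hminus (y (S k)) (y k))) n.
Proof.
  induction n as [|n IH]; simpl.
  - pose proof (hdist_triangle (y 1%nat) (y 0%nat) z). lra.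
  - pose proof (hdist_triangle (y (S (S n))) (y (S n)) z). lra.
Qed.

End HilbertFacts.

Lemma derivable_pt_lim_chord_le g t l h c :
  derivable_pt_lim g t l -> h <> 0 ->
  (forall s, 0 < s <= 1 -> c * s <= g (t + s * h) - g t) -> c <= l * h.
Proof.
  intros Hg Hh Hchord.
  destruct (Rle_dec c (l * h)) as [|Hlt]; [assumption|exfalso].
  assert (habs : 0 < Rabs h) by (apply Rabs_pos_lt; exact Hh).
  destruct (Hg ((c - l * h) / Rabs h)) as [del Hdel].
  { apply Rdiv_lt_0_compat; lra. }
  pose proof (cond_pos del) as del_pos.
  set (s := Rmin 1 (del / (2 * Rabs h))).
  assert (s_pos : 0 < s) by (apply Rmin_pos; [lra | apply Rdiv_lt_0_compat; lra]).
  assert (s_le1 : s <= 1) by apply Rmin_l.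
  assert (sh_nz : s * h <> 0) by (apply Rmult_integral_contrapositive; split; lra).
  assert (Rabs (s * h) = s * Rabs h) as Eabs by (rewrite Rabs_mult, Rabs_right; lra).
  assert (sh_small : Rabs (s * h) < del).
  { rewrite Eabs.
    assert (s * Rabs h <= del / (2 * Rabs h) * Rabs h)
      by (apply Rmult_le_compat_r; [lra | apply Rmin_r]).
    replace (del / (2 * Rabs h) * Rabs h) with (del / 2) in * by (field; lra). lra. }
  specialize (Hdel (s * h) sh_nz sh_small).
  specialize (Hchord s (conj s_pos s_le1)).
  set (q := (g (t + s * h) - g t) / (s * h)) in Hdel.
  assert (g (t + s * h) - g t = q * (s * h)) as Eq by (unfold q; field; split; lra).
  assert (Hclose : Rabs ((q - l) * (s * h)) < (c - l * h) / Rabs h * (s * Rabs h)).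
  { rewrite Rabs_mult, Eabs. apply Rmult_lt_compat_r; [nra | exact Hdel]. }
  replace ((c - l * h) / Rabs h * (s * Rabs h)) with ((c - l * h) * s) in * by (field; lra).
  apply Rabs_def2 in Hclose. nra.
Qed.

Lemma desing_tangent {eta phi dphi} : desing eta phi dphi ->
  forall t s, 0 < t < eta -> 0 <= s < eta -> phi s <= phi t + dphi t * (s - t).
Proof.
  intros (_ & _ & _ & Hconc & Hder & _) t s Ht Hs.
  destruct (Req_dec s t) as [->|Hst]; [lra|].
  enough (phi s - phi t <= dphi t * (s - t)) by lra.
  apply (derivable_pt_lim_chord_le phi t); [apply Hder, Ht | lra |].
  intros l Hl.
  pose proof (Hconc s t l Hs ltac:(lra) ltac:(lra)) as C.
  replace (l * s + (1 - l) * t) with (t + l * (s - t)) in C by ring.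
  lra.
Qed.

Lemma two_mul_le_add_of_sqr_le d c q :
  0 <= c -> 0 <= q -> d ^ 2 <= c * q -> 2 * d <= c + q.
Proof.
  intros Hc Hq Hd.
  destruct (Rle_lt_dec (2 * d) (c + q)) as [|Hlt]; [assumption|].
  pose proof (pow2_ge_0 (c - q)). nra.
Qed.

Lemma KL_descent_step (phi : R -> R) r1 r2 d u v p sg c M :
  0 < u -> 0 < v -> 0 < p ->
  r2 + u * d ^ 2 <= r1 ->
  v * sg <= c ->
  1 <= p * sg ->
  phi r2 <= phi r1 + p * (r2 - r1) ->
  / (u * v) <= M ->
  2 * d <= c + M * (phi r1 - phi r2).
Proof.
  intros Hu Hv Hp Hdesc Herr HKL Htan HM.
  set (D := phi r1 - phi r2).
  assert (sg_pos : 0 < sg) by nra.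
  assert (c_pos : 0 < c) by nra.
  assert (w_nonneg : 0 <= u * d ^ 2) by (pose proof (pow2_ge_0 d); nra).
  assert (D_ge : p * (u * d ^ 2) <= D) by (unfold D; nra).
  assert (D_nonneg : 0 <= D) by nra.
  assert (u * v * d ^ 2 <= D * c).
  { assert (u * d ^ 2 <= D * sg) by nra. nra. }
  assert (d ^ 2 <= M * D * c).
  { assert (inv_pos : 0 < / (u * v)) by (apply Rinv_0_lt_compat; nra).
    replace (d ^ 2) with (/ (u * v) * (u * v * d ^ 2)) by (field; lra).
    apply Rle_trans with (/ (u * v) * (D * c)); [apply Rmult_le_compat_l; lra|].
    rewrite Rmult_assoc. apply Rmult_le_compat_r; nra. }
  apply two_mul_le_add_of_sqr_le; nra.
Qed.

Lemma sum_f_1_succ g n : sum_f 1 (S (S n)) g = sum_f 1 (S n) g + g (S (S n)).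
Proof.
  unfold sum_f. replace (S (S n) - 1)%nat with (S n) by lia.
  replace (S n - 1)%nat with n by lia.
  simpl. rewrite Nat.add_1_r. reflexivity.
Qed.

Lemma sum_f_R0_split_head g n : sum_f_R0 g (S n) = g 0%nat + sum_f 1 (S n) g.
Proof.
  induction n as [|n IH]; [reflexivity|].
  rewrite tech5, IH, sum_f_1_succ. ring.
Qed.

Lemma sum_f_1_le_series {g E} n :
  infinite_sum (fun i => g (S i)) E -> (forall i, 0 <= g (S i)) -> sum_f 1 n g <= E.
Proof.
  intros HE Hg. unfold sum_f.
  rewrite (sum_eq _ (fun i => g (S i))) by (intros; f_equal; lia).
  apply sum_incr; assumption.
Qed.

Lemma Gamma_low_fv {V : Hilbert} {f : V -> ereal} {xs fs eta r y} :
  Gamma_low f xs fs eta r y ->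
  f y = EFin (fv (f y)) /\ fs <= fv (f y) < fs + eta /\ hnorm (hminus y xs) < r.
Proof. intros (N & L & U). destruct (f y); simpl in *; [auto | contradiction]. Qed.

Lemma Gamma_low_mono {V : Hilbert} {f : V -> ereal} {xs fs eta} r r' {y} :
  r <= r' -> Gamma_low f xs fs eta r y -> Gamma_low f xs fs eta r' y.
Proof. intros Hr (N & G). split; [lra | exact G]. Qed.

Section Descent.

Context {H : Hilbert} {f : H -> ereal} {xs : H} {fs eta delta : R}.
Context {phi dphi : R -> R} {x : nat -> H} {a b eps : nat -> R} {M : R}.

Hypothesis Hdes : desing eta phi dphi.
Hypothesis HKL : KL_on f xs fs eta delta dphi.
Hypothesis H1 : forall k, 0 < a k /\
  ele (eaddr (f (x (S k))) (a k * (hnorm (hminus (x (S k)) (x k))) ^ 2)) (f (x k)).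
Hypothesis H2 : forall k, 0 < b (S k) /\ 0 <= eps (S k) /\
  ele (emulr (b (S k)) (lazy_slope f (x (S k))))
      (EFin (hnorm (hminus (x (S k)) (x k)) + eps (S k))).
Hypothesis M_ub : forall k, (1 <= k)%nat -> / (a k * b k) <= M.

Local Notation step k := (hnorm (hminus (x (S k)) (x k))).
Local Notation level k := (fv (f (x k)) - fs).
Local Notation in_ball r k := (Gamma_low f xs fs eta r (x k)).

Lemma M_pos : 0 < M.
Proof.
  apply Rlt_le_trans with (/ (a 1%nat * b 1%nat)); [|apply M_ub; lia].
  apply Rinv_0_lt_compat, Rmult_lt_0_compat; [apply (H1 1%nat) | apply (H2 0%nat)].
Qed.

Lemma descent_finite {k F1 F2} :
  f (x k) = EFin F1 -> f (x (S k)) = EFin F2 -> F2 + a k * step k ^ 2 <= F1.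
Proof. intros E1 E2. destruct (H1 k) as [_ Hle]. rewrite E1, E2 in Hle. exact Hle. Qed.

Lemma step_le_sqrt_level {k F} :
  in_ball delta (S k) -> f (x k) = EFin F -> step k <= sqrt ((F - fs) / a k).
Proof.
  intros G E. destruct (Gamma_low_fv G) as (E' & R' & _).
  pose proof (descent_finite E E') as Hdesc. destruct (H1 k) as [a_pos _].
  rewrite <- (sqrt_square (step k)) by apply hnorm_nonneg.
  apply sqrt_le_1_alt.
  apply Rmult_le_reg_l with (a k); [lra|].
  replace (a k * ((F - fs) / a k)) with (F - fs) by (field; lra). lra.
Qed.

Lemma step_estimate j : in_ball delta (S j) -> in_ball delta (S (S j)) ->
  2 * step (S j) <= step j + eps (S j) + M * (phi (level (S j)) - phi (level (S (S j)))).
Proof.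
  intros G1 G2.
  destruct (Gamma_low_fv G1) as (E1 & R1 & N1), (Gamma_low_fv G2) as (E2 & R2 & _).
  pose proof (descent_finite E1 E2) as Hdesc.
  destruct (H1 (S j)) as [a_pos _], (H2 j) as (b_pos & eps_pos & Herr).
  pose proof (hnorm_nonneg (hminus (x (S j)) (x j))).
  pose proof (hnorm_nonneg (hminus (x (S (S j))) (x (S j)))).
  destruct (Req_dec (fv (f (x (S j)))) fs) as [Z|Z].
  - (* at the critical level, sufficient decrease forces the next step to vanish *)
    assert (a (S j) * step (S j) ^ 2 <= 0) by lra.
    assert (step (S j) ^ 2 <= 0).
    { apply Rmult_le_reg_l with (a (S j)); lra. }
    assert (step (S j) = 0) as -> by nra.
    replace (level (S (S j))) with (level (S j)) by nra. lra.
  - destruct (lazy_slope f (x (S j))) as [sg|] eqn:Hslope; [|contradiction].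
    assert (G1_strict : Gamma f xs fs eta delta (x (S j)))
      by (split; [lra|]; rewrite E1; simpl; lra).
    pose proof (HKL _ G1_strict) as Hkl. rewrite Hslope in Hkl. simpl in Hkl, Herr.
    apply (KL_descent_step phi (level (S j)) (level (S (S j))) (step (S j))
             (a (S j)) (b (S j)) (dphi (level (S j))) sg); try lra.
    + apply Hdes. lra.
    + apply (desing_tangent Hdes); lra.
    + apply M_ub. lia.
Qed.

Lemma length_estimate n : (forall i, (i <= S (S n))%nat -> in_ball delta i) ->
  sum_f 1 (S n) (fun k => step k) + step (S n)
    <= step 0%nat + M * (phi (level 1%nat) - phi (level (S (S n)))) + sum_f 1 (S n) eps.
Proof.
  induction n as [|n IH]; intro Hall.
  - pose proof (step_estimate 0 (Hall 1%nat ltac:(lia)) (Hall 2%nat ltac:(lia))).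
    unfold sum_f. simpl. lra.
  - rewrite !sum_f_1_succ.
    pose proof (IH ltac:(intros; apply Hall; lia)).
    pose proof (step_estimate (S n) (Hall (S (S n)) ltac:(lia)) (Hall (S (S (S n))) ltac:(lia))).
    lra.
Qed.

Context {rho E : R}.

Hypothesis rho_lt_delta : rho < delta.
Hypothesis S_stay : forall k, (forall i, (i <= k)%nat -> in_ball rho i) -> in_ball delta (S k).
Hypothesis x0_in : Gamma f xs fs eta rho (x 0%nat).
Hypothesis eps_series : infinite_sum (fun i => eps (S i)) E.
Hypothesis budget : hnorm (hminus xs (x 0%nat)) + 2 * sqrt (level 0%nat / a 0%nat)
  + M * phi (level 0%nat) + E < rho.

Lemma x0_in_low : in_ball rho 0.
Proof.
  destruct x0_in as (N & L & U). split; [exact N|].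
  destruct (f (x 0%nat)); simpl in *; split; lra.
Qed.

Lemma path_length_le K : (forall i, (i <= S K)%nat -> in_ball delta i) ->
  sum_f_R0 (fun k => step k) K <= 2 * step 0%nat + M * phi (level 1%nat) + E.
Proof.
  intro Hall.
  pose proof M_pos. pose proof (hnorm_nonneg (hminus (x 1%nat) (x 0%nat))).
  assert (phi_level_nonneg : forall i, in_ball delta i -> 0 <= M * phi (level i)).
  { intros i Gi. destruct (Gamma_low_fv Gi) as (_ & Ri & _).
    apply Rmult_le_pos; [lra|]. apply Hdes. lra. }
  assert (E_nonneg : 0 <= E).
  { apply Rle_trans with (sum_f 1 1 eps); [apply (H2 0%nat)|].
    apply sum_f_1_le_series; [exact eps_series | intro; apply H2]. }
  destruct K as [|n].
  - simpl. pose proof (phi_level_nonneg 1%nat (Hall 1%nat ltac:(lia))). lra.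
  - rewrite sum_f_R0_split_head.
    pose proof (length_estimate n Hall).
    pose proof (sum_f_1_le_series (S n) eps_series (fun i => proj1 (proj2 (H2 i)))).
    pose proof (phi_level_nonneg (S (S n)) (Hall _ (le_n _))).
    pose proof (hnorm_nonneg (hminus (x (S (S n))) (x (S n)))).
    lra.
Qed.

Lemma phi_level_succ_le {k F} : f (x k) = EFin F -> 0 < F - fs < eta ->
  in_ball delta (S k) -> phi (level (S k)) <= phi (F - fs).
Proof.
  intros Ek Hk G. destruct (Gamma_low_fv G) as (ES & RS & _).
  pose proof (descent_finite Ek ES). destruct (H1 k) as [a_pos _].
  pose proof (pow2_ge_0 (step k)).
  assert (level (S k) <= F - fs) by nra.
  pose proof (desing_tangent Hdes (F - fs) (level (S k)) Hk ltac:(lra)).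
  assert (0 < dphi (F - fs)) by (apply Hdes; lra).
  assert (0 <= dphi (F - fs) * (F - fs - level (S k))) by (apply Rmult_le_pos; lra).
  lra.
Qed.

Lemma iterates_in_ball i : in_ball rho i.
Proof.
  pose proof M_pos as M_pos.
  pose proof x0_in_low as X0.
  assert (X1 : in_ball delta 1).
  { apply S_stay. intros i0 Hi0. replace i0 with 0%nat by lia. exact X0. }
  destruct (Gamma_low_fv X0) as (E0 & _ & _).
  assert (level_0_pos : 0 < level 0%nat < eta).
  { pose proof x0_in as (_ & L0 & U0). rewrite E0 in L0, U0. simpl in L0, U0. lra. }
  pose proof (phi_level_succ_le E0 level_0_pos X1) as phi_decr.
  pose proof (step_le_sqrt_level X1 E0) as Hstep0.
  pose proof budget as Hbudget. rewrite hdist_sym in Hbudget.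
  enough (prefix : forall K i, (i <= K)%nat -> in_ball rho i)
    by exact (prefix i i (le_n i)).
  induction K as [|K IH]; intros j Hj.
  - replace j with 0%nat by lia. exact X0.
  - destruct (Nat.le_gt_cases j K) as [Hjk|Hjk]; [auto|].
    replace j with (S K) by lia.
    destruct (S_stay K IH) as [_ GG]. split; [|exact GG].
    assert (Hall : forall i, (i <= S K)%nat -> in_ball delta i).
    { intros i0 Hi0. destruct (Nat.le_gt_cases i0 K).
      - apply (Gamma_low_mono rho); [lra | auto].
      - replace i0 with (S K) by lia. apply S_stay, IH. }
    pose proof (hdist_le_path_length x xs K).
    pose proof (path_length_le K Hall).
    pose proof (Rmult_le_compat_l M _ _ (Rlt_le _ _ M_pos) phi_decr).
    lra.
Qed.

End Descent.

Theorem mainTheorem8 (H : Hilbert) (f : H -> ereal) (xs : H) (fs eta delta rho : R)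
  (phi dphi : R -> R) (x : nat -> H) (a b eps : nat -> R) (M : R) :
  proper f -> lsc f -> f xs = EFin fs ->
  0 < eta -> desing eta phi dphi -> KL_on f xs fs eta delta dphi ->
  (forall k, 0 < a k /\
     ele (eaddr (f (x (S k))) (a k * (hnorm (hminus (x (S k)) (x k))) ^ 2)) (f (x k))) ->
  (forall k, 0 < b (S k) /\ 0 <= eps (S k) /\
     ele (emulr (b (S k)) (lazy_slope f (x (S k))))
         (EFin (hnorm (hminus (x (S k)) (x k)) + eps (S k)))) ->
  (exists a_, 0 < a_ /\ forall k, a_ <= a k) ->
  ~ (exists l, infinite_sum (fun k => Rabs (b k)) l) ->
  is_lub (fun r => exists k, (1 <= k)%nat /\ r = / (a k * b k)) M ->
  (exists l, infinite_sum (fun k => Rabs (eps k)) l) ->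
  delta > rho -> rho > 0 ->
  (forall k, (forall i, (i <= k)%nat -> Gamma_low f xs fs eta rho (x i)) ->
     Gamma_low f xs fs eta delta (x (S k))) ->
  Gamma f xs fs eta rho (x 0%nat) ->
  (exists E, infinite_sum (fun i => eps (S i)) E /\
     hnorm (hminus xs (x 0%nat)) + 2 * sqrt ((fv (f (x 0%nat)) - fs) / a 0%nat)
       + M * phi (fv (f (x 0%nat)) - fs) + E < rho) ->
  forall K, (1 <= K)%nat ->
    Gamma_low f xs fs eta rho (x K) /\
    sum_f 1 K (fun k => hnorm (hminus (x (S k)) (x k))) + hnorm (hminus (x (S K)) (x K))
      <= hnorm (hminus (x 1%nat) (x 0%nat))
         + M * (phi (fv (f (x 1%nat)) - fs) - phi (fv (f (x (S K))) - fs))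
         + sum_f 1 K eps.
Proof.
  (* Properness, lower semicontinuity, f xs = fs and H3 (i), (ii), (iv) are only needed
     for the convergence results built on this estimate. *)
  intros _ _ _ _ Hdes HKL H1 H2 _ _ HM _ Hrho _ HS HX0 (E & HE & Hbudget) K HK.
  assert (M_ub : forall k, (1 <= k)%nat -> / (a k * b k) <= M)
    by (intros k Hk; apply HM; exists k; auto).
  pose proof (iterates_in_ball Hdes HKL H1 H2 M_ub Hrho HS HX0 HE Hbudget) as Hin.
  split; [exact (Hin K)|].
  destruct K as [|n]; [lia|].
  apply (length_estimate Hdes HKL H1 H2 M_ub).
  intros i Hi. apply (Gamma_low_mono rho); [lra | exact (Hin i)].
Qed.
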